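(* Let $k\ge 3$ and let $D$ be a digraph on $n$ vertices with $\delta^0(D)\ge\lceil (n+k)/2\rceil-1$. Let $S=(s_1,\dots,s_k)$ be a sequence of distinct vertices of $D$, let $C$ be a longest $S$-cycle in $D$, suppose $C$ is not Hamiltonian, and let $H$ be the subdigraph of $D$ induced by $V(D)\setminus V(C)$. Let $F$ be the set of vertices of $C$ which receive an edge from some vertex of $H$, and $T$ the set of vertices of $C$ which send an edge to some vertex of $H$. Then no vertex of $C$ which lies in $T$ has its successor on $C$ in $F$.
   Context: Digraphs have no loops and at most one edge in each direction between any two vertices; paths and cycles are directed. $\delta^0(D)=\min\{\delta^+(D),\delta^-(D)\}$. An $S$-cycle is a directed cycle in $D$ encountering $s_1,\dots,s_k$ in this order. The successor of $x$ on $C$ is the vertex following $x$ along the direction of $C$. *)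

From mathcomp Require Import all_boot.
Set Implicit Arguments. Unset Strict Implicit. Unset Printing Implicit Defensive.

(* A digraph on a finite vertex type V is an irreflexive relation e : rel V
   (e x y = there is an edge x -> y); a relation automatically has at most one
   edge in each direction between two vertices. *)
Definition digraph (V : finType) (e : rel V) : Prop := irreflexive e.

Definition outdeg (V : finType) (e : rel V) (v : V) : nat := #|[set w | e v w]|.
Definition indeg (V : finType) (e : rel V) (v : V) : nat := #|[set w | e w v]|.

Definition min_semideg_ge (V : finType) (e : rel V) (d : nat) : Prop :=
  forall v : V, d <= outdeg e v /\ d <= indeg e v.

(* A directed cycle, given by the cyclic sequence of its (distinct) vertices
   c = [:: x_0; ...; x_{m-1}] with edges x_i -> x_{i+1} and x_{m-1} -> x_0. *)
Definition dicycle (V : finType) (e : rel V) (c : seq V) : bool :=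
  [&& uniq c, 2 <= size c & cycle e c].

(* An S-cycle: a directed cycle encountering s_1, ..., s_k in this (cyclic)
   order, i.e. some rotation of c contains S as a subsequence. *)
Definition S_cycle (V : finType) (e : rel V) (S c : seq V) : bool :=
  dicycle e c && has (fun i => subseq S (rot i c)) (iota 0 (size c)).

(* The successor of x on C is [next c x] (mathcomp path.v). *)

From mathcomp Require Import all_boot zify.
Set Implicit Arguments. Unset Strict Implicit. Unset Printing Implicit Defensive.

(* If w is on C, w -> a,
   b -> next C w, and a ~> b is a path in H, then the path can be spliced into
   C between w and its successor, giving a longer S-cycle.  Hence, whenever
   a ~> b in H, w |-> next C w maps the in-neighbours of a on C to vertices of
   C that are not out-neighbours of b; with the semidegree bound this gives
     n + k <= |C| + #(ancestors of a in H) + #(descendants of b in H).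
   Applied to (h, h), (h', h') and then (h', h), this forces H to be strongly
   connected (only k >= 1 is needed), so an edge x -> h from T together with
   an edge h' -> next C x into F would allow such a splicing. *)

Lemma dicycle_rot (V : finType) (e : rel V) i (c : seq V) :
  dicycle e (rot i c) = dicycle e c.
Proof. by rewrite /dicycle rot_uniq size_rot rot_cycle. Qed.

Lemma has_subseq_rotP (T : eqType) (S c : seq T) : 0 < size c ->
  reflect (exists i, subseq S (rot i c))
          (has (fun i => subseq S (rot i c)) (iota 0 (size c))).
Proof.
move=> c_gt0; apply: (iffP hasP) => [[i _ sub_c] | [i sub_c]]; first by exists i.
have [lt_ic | le_ci] := ltnP i (size c); first by exists i; rewrite ?mem_iota.
by exists 0; rewrite ?mem_iota // rot0 -(rot_oversize le_ci).
Qed.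

Lemma dicycle_detour (V : finType) (e : rel V) w y t a p :
  dicycle e (w :: y :: t) -> [disjoint a :: p & w :: y :: t] -> uniq (a :: p) ->
  e w a -> path e a p -> e (last a p) y -> dicycle e (w :: (a :: p) ++ y :: t).
Proof.
case/and3P=> uC _ cC; rewrite disjoint_has has_sym => off up ewa pap epy.
apply/and3P; split => //.
  move: uC off; rewrite cons_uniq => /andP[wyt uyt] /norP[wap offyt].
  by rewrite cons_uniq cat_uniq mem_cat negb_or wap wyt up offyt uyt.
rewrite /cycle rcons_cat cat_path /= ewa pap epy.
by move: cC; rewrite /cycle /= => /andP[].
Qed.

Lemma S_cycle_detour (V : finType) (e : rel V) (S C : seq V) w a p :
  S_cycle e S C -> w \in C -> all (fun v => v \notin C) (a :: p) -> uniq (a :: p) ->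
  e w a -> path e a p -> e (last a p) (next C w) ->
  exists2 C', S_cycle e S C' & size C' = size C + size (a :: p).
Proof.
case/andP=> dC /hasP[j _ sub_j] wC off up ewa pap epy.
have [D1 [D2 rotjC]] : exists D1 D2, rot j C = D1 ++ w :: D2.
  by case/splitPr: (etrans (mem_rot j C w) wC) => D1 D2; exists D1, D2.
have CwE : w :: D2 ++ D1 = rot (size D1) (rot j C) by rewrite rotjC rot_size_cat.
have uC : uniq C by case/and3P: dC.
have dCw : dicycle e (w :: D2 ++ D1) by rewrite CwE !dicycle_rot.
have memCw : w :: D2 ++ D1 =i C by move=> v; rewrite CwE !mem_rot.
have sizeCw : size (w :: D2 ++ D1) = size C by rewrite CwE !size_rot.
have nextCw : next C w = next (w :: D2 ++ D1) w by rewrite CwE !next_rot ?rot_uniq.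
case DE : (D2 ++ D1) dCw memCw sizeCw nextCw => [|y t] dCw memCw sizeCw nextCw.
  by case/and3P: dCw => _ /=.
rewrite /= eqxx in nextCw; rewrite nextCw in epy.
exists (w :: (a :: p) ++ y :: t); last by rewrite -sizeCw /= size_cat /=; lia.
apply/andP; split.
  apply: dicycle_detour => //; rewrite disjoint_has.
  by apply/hasPn => v /(allP off); rewrite /= memCw.
apply/has_subseq_rotP => //; exists (size (w :: (a :: p) ++ D2)).
rewrite -DE catA -cat_cons rot_size_cat (subseq_trans sub_j) // rotjC.
apply: cat_subseq => //.
exact: (cat_subseq (subseq_refl [:: w]) (suffix_subseq (a :: p) D2)).
Qed.

Lemma disjoint_card_leq (T : finType) (A B X : {set T}) :
  A \subset X -> B \subset X -> [disjoint A & B] -> #|A| + #|B| <= #|X|.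
Proof.
move=> sAX sBX dAB; have /eqP <- : #|A :|: B| == #|A| + #|B|.
  by rewrite (leq_card_setU A B).2.
by rewrite subset_leq_card // subUset sAX.
Qed.

(* Edges of D ending off C: from a vertex off C, its paths are the paths of H. *)
Definition off_rel (V : finType) (e : rel V) (C : seq V) : rel V :=
  [rel u v | e u v && (v \notin C)].

Lemma path_off_rel (V : finType) (e : rel V) (C : seq V) a p :
  path (off_rel e C) a p -> all (fun v => v \notin C) p.
Proof. by elim: p a => //= v p IHp a /andP[/andP[_ ->] /IHp]. Qed.

Section OffCycle.

Variables (V : finType) (e : rel V) (C : seq V).

Definition off_cycle : {set V} := ~: [set v in C].
Definition in_nbrs a := [set w | (w \in C) && e w a].
Definition out_nbrs b := [set w | (w \in C) && e b w].
Definition ancestors a := [set u | (u \notin C) && connect (off_rel e C) u a].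
Definition descendants b := [set v | (v \notin C) && connect (off_rel e C) b v].

Lemma card_set_in_cycle : uniq C -> #|[set v in C]| = size C.
Proof. by move=> uC; rewrite cardsE; apply/card_uniqP. Qed.

Lemma card_off_cycle : uniq C -> #|off_cycle| + size C = #|V|.
Proof. by move=> uC; rewrite addnC -card_set_in_cycle // cardsC. Qed.

Lemma ancestors_sub a : ancestors a \subset off_cycle.
Proof. by apply/subsetP => u; rewrite !inE => /andP[]. Qed.

Lemma descendants_sub b : descendants b \subset off_cycle.
Proof. by apply/subsetP => v; rewrite !inE => /andP[]. Qed.

Lemma out_nbrs_sub b : out_nbrs b \subset [set v in C].
Proof. by apply/subsetP => w; rewrite !inE => /andP[]. Qed.

Lemma connect_off_rel_notin a b : a \notin C -> connect (off_rel e C) a b -> b \notin C.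
Proof.
move=> aC /connectP[p /path_off_rel offp ->]; case/lastP: p offp => [//|p v].
by rewrite last_rcons all_rcons => /andP[].
Qed.

Hypothesis e_irr : irreflexive e.

Lemma indeg_lt a : a \notin C -> indeg e a < #|in_nbrs a| + #|ancestors a|.
Proof.
move=> aC; have anc_a : a \in ancestors a by rewrite inE aC connect0.
have : [set w | e w a] \subset in_nbrs a :|: ancestors a :\ a.
  apply/subsetP => w; rewrite !inE => ewa.
  have [wC | wC] := boolP (w \in C); first by rewrite ewa.
  rewrite /= connect1 ?andbT; last by rewrite /off_rel /= ewa.
  by apply: contraTneq ewa => ->; rewrite e_irr.
move/subset_leq_card/leq_trans/(_ (leq_card_setU _ _)).
by rewrite (cardsD1 a (ancestors a)) anc_a /indeg; lia.
Qed.

Lemma outdeg_lt b : b \notin C -> outdeg e b < #|out_nbrs b| + #|descendants b|.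
Proof.
move=> bC; have desc_b : b \in descendants b by rewrite inE bC connect0.
have : [set w | e b w] \subset out_nbrs b :|: descendants b :\ b.
  apply/subsetP => w; rewrite !inE => ebw.
  have [wC | wC] := boolP (w \in C); first by rewrite ebw.
  rewrite /= connect1 ?andbT; last by rewrite /off_rel /= ebw.
  by apply: contraTneq ebw => ->; rewrite e_irr.
move/subset_leq_card/leq_trans/(_ (leq_card_setU _ _)).
by rewrite (cardsD1 b (descendants b)) desc_b /outdeg; lia.
Qed.

End OffCycle.

Section LongestSCycle.

Variables (V : finType) (e : rel V) (S C : seq V).
Hypothesis SC : S_cycle e S C.
Hypothesis C_longest : forall C', S_cycle e S C' -> size C' <= size C.

Lemma no_detour w a b : w \in C -> a \notin C ->
  connect (off_rel e C) a b -> e w a -> e b (next C w) -> False.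
Proof.
move=> wC aC /connectP[p0 /shortenP[p pab uap _] ->] ewa epw.
have off : all (fun v => v \notin C) (a :: p) by rewrite /= aC (path_off_rel pab).
have pa : path e a p by apply: sub_path pab => u v /andP[].
have [C' /C_longest] := S_cycle_detour SC wC off uap ewa pa epw.
by move=> /[swap] ->; rewrite /= addnS ltnNge leq_addr.
Qed.

Lemma in_out_nbrs_card a b : a \notin C -> connect (off_rel e C) a b ->
  #|in_nbrs e C a| + #|out_nbrs e C b| <= size C.
Proof.
move=> aC ab; have uC : uniq C by case/andP: SC => /and3P[].
have next_inj : injective (next C) := can_inj (prev_next uC).
have out_sub := out_nbrs_sub e C b.
have /subset_leq_card : next C @: in_nbrs e C a \subset [set v in C] :\: out_nbrs e C b.
  apply/subsetP => _ /imsetP[w /[!inE] /andP[wC ewa] ->].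
  rewrite mem_next wC andbT; apply/negP => epw.
  exact: no_detour wC aC ab ewa epw.
have sizeCE := card_set_in_cycle uC.
rewrite card_imset // cardsD (setIidPr out_sub) sizeCE.
by have := subset_leq_card out_sub; rewrite sizeCE; lia.
Qed.

Hypothesis e_irr : irreflexive e.
Hypothesis semideg : min_semideg_ge e ((#|V| + size S).+1./2 - 1).

Lemma semideg_card a b : a \notin C -> connect (off_rel e C) a b ->
  #|V| + size S <= size C + #|ancestors e C a| + #|descendants e C b|.
Proof.
move=> aC ab; have bC := connect_off_rel_notin aC ab.
have := in_out_nbrs_card aC ab.
have := indeg_lt e_irr aC; have := outdeg_lt e_irr bC.
have [_ indeg_a] := semideg a; have [outdeg_b _] := semideg b.
have := odd_double_half (#|V| + size S).+1; have := leq_b1 (odd (#|V| + size S).+1).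
rewrite -muln2; lia.
Qed.

Hypothesis S_nonempty : 0 < size S.

Lemma connect_off_cycle h h' :
  h \notin C -> h' \notin C -> connect (off_rel e C) h h'.
Proof.
move=> hC h'C; apply: contraT => not_hh'.
have uC : uniq C by case/andP: SC => /and3P[].
have cardH := card_off_cycle uC.
have count_h := semideg_card hC (connect0 _ h).
have count_h' := semideg_card h'C (connect0 _ h').
have : [disjoint descendants e C h & ancestors e C h'].
  rewrite -setI_eq0; apply/eqP/setP => v; rewrite !inE.
  apply/negbTE/negP => /and3P[/andP[_ hv] _ vh'].
  by rewrite (connect_trans hv vh') in not_hh'.
move/(disjoint_card_leq (descendants_sub e C h) (ancestors_sub e C h')) => split_H.
have : ~~ [disjoint ancestors e C h & descendants e C h'].
  apply/negP => /(disjoint_card_leq (ancestors_sub e C h) (descendants_sub e C h')).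
  lia.
rewrite -setI_eq0 => /set0Pn[v]; rewrite !inE => /andP[/andP[_ vh] /andP[_ h'v]].
have := semideg_card h'C (connect_trans h'v vh); lia.
Qed.

End LongestSCycle.

Theorem corollary7 (V : finType) (e : rel V) (k : nat) (S C : seq V) :
  digraph e ->
  3 <= k ->
  min_semideg_ge e ((#|V| + k).+1./2 - 1) ->
  size S = k -> uniq S ->
  S_cycle e S C ->
  (forall C' : seq V, S_cycle e S C' -> size C' <= size C) ->
  size C < #|V| ->
  let F := [set v in C | [exists h, (h \notin C) && e h v]] in
  let T := [set v in C | [exists h, (h \notin C) && e v h]] in
  forall x, x \in C -> x \in T -> next C x \notin F.
Proof.
move=> e_irr k_ge3 semideg sizeS _ SC C_longest _ F T x xC.
rewrite !inE xC => /existsP[h /andP[hC exh]].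
rewrite mem_next xC; apply/existsP => -[h' /andP[h'C eh'y]].
rewrite -sizeS in semideg k_ge3.
have hh' := connect_off_cycle SC C_longest e_irr semideg (ltnW (ltnW k_ge3)) hC h'C.
exact: (no_detour SC C_longest xC hC hh' exh eh'y).
Qed.
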